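(* Let $\mathcal{T}$ be the twisted $N=2$ superconformal algebra (defined in the context), let $\lambda\in\mathbb{C}^*$, $\alpha\in\mathbb{C}$ and $t\in\{1,-1\}$. Let $V=\mathbb{C}[\partial^2]\oplus\partial\mathbb{C}[\partial^2]$ be the $\mathbb{Z}_2$-graded vector space with $V_{\bar0}=\mathbb{C}[\partial^2]$ and $V_{\bar1}=\partial\mathbb{C}[\partial^2]$. For $m\in\mathbb{Z}$, $r\in\frac12+\mathbb{Z}$, $p\in\frac12\mathbb{Z}$ and $f(\partial^2)\in\mathbb{C}[\partial^2]$ define $$L_mf(\partial^2)=\lambda^m(\partial^2+m\alpha)f(\partial^2+m),\qquad L_m\partial f(\partial^2)=\lambda^m\big(\partial^2+m(\alpha+\tfrac12)\big)\partial f(\partial^2+m),$$ $$I_rf(\partial^2)=-2t^{2r}\lambda^{r}\alpha f(\partial^2+r),\qquad I_r\partial f(\partial^2)=t^{2r}\lambda^{r}(1-2\alpha)\partial f(\partial^2+r),$$ $$G_pf(\partial^2)=t^{2p}\lambda^p\partial f(\partial^2+p),\qquad G_p\partial f(\partial^2)=(-t)^{2p}\lambda^p(\partial^2+2p\alpha)f(\partial^2+p).$$ Then these formulas make $V$ a $\mathcal{T}$-module (denoted $\mathcal{M}_t(\lambda,\alpha)$), and as a module over $\mathcal{U}(\mathfrak{h})$, $\mathfrak{h}=\mathbb{C}L_0\oplus\mathbb{C}G_0$, it is free of rank $1$.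
   Context: The twisted $N=2$ superconformal algebra $\mathcal{T}$ is the Lie superalgebra over $\mathbb{C}$ with basis $\{L_m, I_r, G_p\mid m\in\mathbb{Z}, r\in\frac12+\mathbb{Z}, p\in\frac12\mathbb{Z}\}$, even part spanned by the $L_m,I_r$, odd part spanned by the $G_p$, and with the only nonzero brackets $[L_m,L_n]=(m-n)L_{m+n}$, $[L_m,I_r]=-rI_{m+r}$, $[L_m,G_p]=(\frac m2-p)G_{m+p}$, $[I_r,G_p]=G_{r+p}$, and $[G_p,G_q]=(-1)^{2p}2L_{p+q}$ if $p+q\in\mathbb{Z}$, $[G_p,G_q]=(-1)^{2p+1}(p-q)I_{p+q}$ if $p+q\in\frac12+\mathbb{Z}$. A $\mathcal{T}$-module is a $\mathbb{Z}_2$-graded space $V$ with $\mathcal{T}_{\bar i}V_{\bar j}\subseteq V_{\bar i+\bar j}$ and $x(yv)-(-1)^{|x||y|}y(xv)=[x,y]v$. Here $\partial$ is a formal variable, $f(\partial^2+m)$ means the polynomial $f$ evaluated at $\partial^2+m$, and for $p\in\frac12\mathbb{Z}$, $\lambda^p$ means $(\lambda^{1/2})^{2p}$ for a fixed choice of square root $\lambda^{1/2}$. *)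

From HB Require Import structures.
From mathcomp Require Import all_boot all_order all_algebra.
From mathcomp Require Import complex.
From mathcomp Require Import reals.
Set Implicit Arguments. Unset Strict Implicit. Unset Printing Implicit Defensive.
Import Order.TTheory GRing.Theory Num.Theory.
Local Open Scope ring_scope.

(* Basis of the twisted N=2 superconformal algebra T:
   TL m  = L_m             (m : int)
   TI k  = I_{k + 1/2}     (k : int)   -- r = k + 1/2 ranges over 1/2 + Z
   TG n  = G_{n / 2}       (n : int)   -- p = n/2 ranges over (1/2) Z  *)
Inductive Tbasis := TL of int | TI of int | TG of int.

Definition Tpar (a : Tbasis) : bool := if a is TG _ then true else false.

Section Bracket.
Variable F : fieldType.

Definition half : F := 2^-1.
Definition Iidx (k : int) : F := k%:~R + half.
Definition Gidx (n : int) : F := n%:~R * half.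

(* [a, b] = c * e, returned as the pair (c, e); all brackets of basis
   elements are scalar multiples of a single basis element. *)
Definition Tbracket (a b : Tbasis) : F * Tbasis :=
  match a, b with
  | TL m, TL n => ((m - n)%:~R, TL (m + n))
  | TL m, TI k => (- Iidx k, TI (m + k))
  | TI k, TL m => (Iidx k, TI (m + k))
  | TL m, TG n => (m%:~R * half - Gidx n, TG (n + 2 * m))      (* [L_m,G_p] = (m/2-p) G_{m+p} *)
  | TG n, TL m => (- (m%:~R * half - Gidx n), TG (n + 2 * m))
  | TI k, TI l => (0, TL 0)
  | TI k, TG n => (1, TG (2 * k + 1 + n))                      (* [I_r,G_p] = G_{r+p} *)
  | TG n, TI k => (-1, TG (2 * k + 1 + n))
  | TG n1, TG n2 =>
      if ~~ odd (absz (n1 + n2))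
      then (2 * exprz (-1) n1, TL ((n1 + n2) %/ 2)%Z)               (* p+q integer *)
      else (exprz (-1) (n1 + 1) * (Gidx n1 - Gidx n2),
            TI ((n1 + n2 - 1) %/ 2)%Z)                          (* p+q in 1/2+Z *)
  end.

Definition Tsign (a b : Tbasis) : F := if Tpar a && Tpar b then -1 else 1.

Definition linearF (U W : lmodType F) (f : U -> W) :=
  forall (c : F) (u v : U), f (c *: u + v) = c *: f u + f v.

(* rho is a representation of the sub(super)algebra spanned by the basis
   elements in P (P must be closed under brackets), i.e. each rho a is linear
   and  rho a (rho b w) - (-1)^{|a||b|} rho b (rho a w) = rho [a,b] w. *)
Definition is_rep_on (P : pred Tbasis) (W : lmodType F) (rho : Tbasis -> W -> W) :=
  (forall a, P a -> linearF (rho a)) /\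
  (forall a b, P a -> P b -> forall w : W,
     rho a (rho b w) - Tsign a b *: rho b (rho a w)
       = (Tbracket a b).1 *: rho (Tbracket a b).2 w).

Definition is_T_module (W : lmodType F) (V0 V1 : pred W) (rho : Tbasis -> W -> W) :=
  is_rep_on predT rho /\
  (forall a w, w \in V0 -> rho a w \in (if Tpar a then V1 else V0)) /\
  (forall a w, w \in V1 -> rho a w \in (if Tpar a then V0 else V1)).

Definition in_h (a : Tbasis) : bool :=
  match a with TL m => m == 0 | TG n => n == 0 | _ => false end.

(* V is a free U(h)-module of rank 1: there is v in V such that for every
   U(h)-module W (equivalently, representation of h on W) and every w in W
   there is a unique U(h)-module map V -> W sending v to w. *)
Definition free_rank1_Uh (V : lmodType F) (rho : Tbasis -> V -> V) :=
  exists v : V,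
    forall (W : lmodType F) (sigma : Tbasis -> W -> W),
      is_rep_on in_h sigma ->
      forall w : W,
        exists! phi : V -> W,
          [/\ linearF phi,
              (forall a, in_h a -> forall u, phi (rho a u) = sigma a (phi u))
            & phi v = w].

(* The module M_t(lambda, alpha) on V = C[d^2] (+) d C[d^2], where an element
   f(d^2) + d g(d^2) is represented by the pair (f, g) of polynomials in x = d^2.
   s is the fixed square root lambda^{1/2}; lambda^p := s^(2p). *)
Definition shiftp (f : {poly F}) (c : F) : {poly F} := f \Po ('X + c%:P).

Definition Mact (t s alpha : F) (a : Tbasis) (v : {poly F} * {poly F})
    : {poly F} * {poly F} :=
  let: (f, g) := v in
  match a with
  | TL m =>
      let c := m%:~R in
      ((exprz s (2 * m)) *: (('X + (c * alpha)%:P) * shiftp f c),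
       (exprz s (2 * m)) *: (('X + (c * (alpha + half))%:P) * shiftp g c))
  | TI k =>
      let r := Iidx k in
      ((- 2 * exprz t (2 * k + 1) * exprz s (2 * k + 1) * alpha) *: shiftp f r,
       (exprz t (2 * k + 1) * exprz s (2 * k + 1) * (1 - 2 * alpha)) *: shiftp g r)
  | TG n =>
      let p := Gidx n in
      ((exprz (- t) n * exprz s n) *: (('X + (n%:~R * alpha)%:P) * shiftp g p),
       (exprz t n * exprz s n) *: shiftp f p)
  end.

Definition Veven : pred ({poly F} * {poly F}) := fun v => v.2 == 0.
Definition Vodd : pred ({poly F} * {poly F}) := fun v => v.1 == 0.

End Bracket.

From Pilot Require Import Defs.
From HB Require Import structures.
From mathcomp Require Import all_boot all_order all_algebra.
From mathcomp Require Import complex.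
From mathcomp Require Import reals.
From mathcomp Require Import ring zify.
From mathcomp Require boolp.
Import Order.TTheory GRing.Theory Num.Theory.
Set Implicit Arguments. Unset Strict Implicit. Unset Printing Implicit Defensive.
Local Open Scope ring_scope.

(* The bracket relations are identities between pairs of polynomials in
   x = d^2.  Over a field of characteristic 0 it suffices to check them after
   evaluation at every point, where, once t = 1 or t = -1 is substituted, they
   become rational identities in s, alpha, the values f(x + c), g(x + c) and
   the powers s^k, (-1)^k, checked by [field].

   L_0 and G_0 act on M by (f, g) |-> (x f, x g) and (f, g) |-> (x g, f), so
   M is generated by (1, 0) over h.  In any h-module the relations
   [L_0, G_0] = 0 and [G_0, G_0] = 2 L_0 say that L := L_0 and A := G_0
   commute and A^2 = L, so (f, g) |-> f(L) w + A (g(L) w) is an h-map sending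
   (1, 0) to w, and it is the only one since x^i (1, 0) = L_0^i (1, 0) and
   (0, g) = G_0 (g, 0). *)

Section LinearF.
Variables (F : fieldType) (U W : lmodType F) (h : U -> W).
Hypothesis h_lin : linearF h.

Lemma linearF0 : h 0 = 0.
Proof.
by have := h_lin 1 0 0; rewrite !scale1r addr0 -{1}[h 0]add0r => /addIr.
Qed.

Lemma linearFD u v : h (u + v) = h u + h v.
Proof. by have := h_lin 1 u v; rewrite !scale1r. Qed.

Lemma linearFZ c u : h (c *: u) = c *: h u.
Proof. by have := h_lin c u 0; rewrite !addr0 linearF0 addr0. Qed.

Lemma linearF_sum n (c : nat -> F) (u : nat -> U) :
  h (\sum_(i < n) c i *: u i) = \sum_(i < n) c i *: h (u i).
Proof.
elim: n => [|n IH]; first by rewrite !big_ord0 linearF0.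
by rewrite !big_ord_recr /= linearFD IH linearFZ.
Qed.

End LinearF.

Section PolyApply.
Variables (F : fieldType) (W : lmodType F) (L : W -> W) (w : W).

Definition poly_apply (p : {poly F}) : W := \sum_(i < size p) p`_i *: iter i L w.

Lemma poly_apply_widen (p : {poly F}) n : (size p <= n)%N ->
  poly_apply p = \sum_(i < n) p`_i *: iter i L w.
Proof.
move=> le_p_n.
rewrite /poly_apply (big_ord_widen n (fun i => p`_i *: iter i L w) le_p_n).
rewrite big_mkcond; apply: eq_bigr => i _; case: ifPn => // /negbTE.
by rewrite ltnNge => /negbFE le_p_i; rewrite nth_default // scale0r.
Qed.

Lemma poly_apply0 : poly_apply 0 = 0.
Proof. by rewrite /poly_apply size_poly0 big_ord0. Qed.

Lemma poly_apply1 : poly_apply 1 = w.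
Proof. by rewrite /poly_apply size_poly1 big_ord1 coefC scale1r. Qed.

Lemma poly_applyP c (p q : {poly F}) :
  poly_apply (c *: p + q) = c *: poly_apply p + poly_apply q.
Proof.
set n := maxn (size p) (size q).
have le_pq_n : (size (c *: p + q)%R <= n)%N.
  rewrite (leq_trans (size_polyD _ _)) // geq_max leq_maxr andbT.
  exact: leq_trans (size_scale_leq c p) (leq_maxl _ _).
rewrite !(@poly_apply_widen _ n) ?leq_maxl ?leq_maxr // scaler_sumr -big_split.
by apply: eq_bigr => i _; rewrite coefD coefZ scalerDl scalerA.
Qed.

Hypothesis L_lin : linearF L.

Lemma poly_apply_mulX (p : {poly F}) : poly_apply (p * 'X) = L (poly_apply p).
Proof.
rewrite (@poly_apply_widen _ (size p).+1); last first.
  by rewrite (leq_trans (size_polyMleq _ _)) // size_polyX addn2.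
rewrite big_ord_recl coefMX scale0r add0r /poly_apply linearF_sum //.
by apply: eq_bigr => i _; rewrite coefMX.
Qed.

End PolyApply.

Section MactBasic.
Variables (F : fieldType) (t s alpha : F).
Local Notation act := (Mact t s alpha).

Lemma Mact_linear a : linearF (act a).
Proof.
move=> c [f1 g1] [f2 g2]; apply: injective_projections;
by case: a => [m|k|n] /=; rewrite /shiftp !comp_polyD !comp_polyZ -!mul_polyC; ring.
Qed.

Lemma Mact_Veven a w : w \in Veven (F:=F) ->
  act a w \in (if Tpar a then Vodd (F:=F) else Veven (F:=F)).
Proof.
case: w => f g; rewrite !unfold_in /Veven /Vodd /= => /eqP ->.
by case: a => [m|k|n] /=; rewrite /shiftp comp_poly0 ?mulr0 scaler0 eqxx.
Qed.

Lemma Mact_Vodd a w : w \in Vodd (F:=F) ->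
  act a w \in (if Tpar a then Veven (F:=F) else Vodd (F:=F)).
Proof.
case: w => f g; rewrite !unfold_in /Veven /Vodd /= => /eqP ->.
by case: a => [m|k|n] /=; rewrite /shiftp comp_poly0 ?mulr0 scaler0 eqxx.
Qed.

Lemma shiftp0 (f : {poly F}) : shiftp f 0 = f.
Proof. by rewrite /shiftp addr0 comp_polyXr. Qed.

Lemma Mact_L0 f g : act (TL 0) (f, g) = (f * 'X, g * 'X).
Proof. by rewrite /= !mul0r !addr0 !shiftp0 mulr0 expr0z !scale1r ![_ * 'X]mulrC. Qed.

Lemma Mact_G0 f g : act (TG 0) (f, g) = (g * 'X, f).
Proof.
by rewrite /= /Gidx !mul0r !addr0 !shiftp0 !expr0z !mulr1 !scale1r mulrC.
Qed.

End MactBasic.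

Section RepresentationsOfH.
Variables (F : fieldType) (W : lmodType F) (sigma : Tbasis -> W -> W).
Hypothesis sigma_rep : is_rep_on in_h sigma.

Lemma rep_h_comm_L0G0 u : sigma (TL 0) (sigma (TG 0) u) = sigma (TG 0) (sigma (TL 0) u).
Proof.
have := sigma_rep.2 (TL 0) (TG 0) isT isT u.
by rewrite /Tsign /= /Gidx subrr scale0r scale1r => /subr0_eq.
Qed.

Lemma rep_h_sqr_G0 (two_neq0 : (2 : F) != 0) u :
  sigma (TG 0) (sigma (TG 0) u) = sigma (TL 0) u.
Proof.
have := sigma_rep.2 (TG 0) (TG 0) isT isT u.
by rewrite /Tsign /= expr0z mulr1 scaleN1r opprK -mulr2n -scaler_nat => /(scalerI two_neq0).
Qed.

End RepresentationsOfH.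

Section FreeRank1.
Variables (F : fieldType) (t s alpha : F).
Hypothesis two_neq0 : (2 : F) != 0.
Local Notation act := (Mact t s alpha).

Definition free_hom (W : lmodType F) (L A : W -> W) (w : W) (u : {poly F} * {poly F}) : W :=
  poly_apply L w u.1 + A (poly_apply L w u.2).

Section UniversalProperty.
Variables (W : lmodType F) (sigma : Tbasis -> W -> W) (w : W).
Hypothesis sigma_rep : is_rep_on in_h sigma.
Local Notation L := (sigma (TL 0)).
Local Notation A := (sigma (TG 0)).
Let L_lin : linearF L. Proof. exact: sigma_rep.1. Qed.
Let A_lin : linearF A. Proof. exact: sigma_rep.1. Qed.
Local Notation phi := (free_hom L A w).

Lemma free_hom_linear : linearF phi.
Proof.
move=> c [f1 g1] [f2 g2]; rewrite /free_hom /= !poly_applyP.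
by rewrite (linearFD A_lin) (linearFZ A_lin) scalerDr addrACA.
Qed.

Lemma free_hom_act a : in_h a -> forall u, phi (act a u) = sigma a (phi u).
Proof.
case: a => [m|k|n] //= /eqP -> [f g].
- by rewrite Mact_L0 /free_hom !poly_apply_mulX // (linearFD L_lin) rep_h_comm_L0G0.
- by rewrite Mact_G0 /free_hom /= poly_apply_mulX // (linearFD A_lin) rep_h_sqr_G0 // addrC.
Qed.

Lemma free_hom_gen : phi (1, 0) = w.
Proof. by rewrite /free_hom poly_apply1 poly_apply0 (linearF0 A_lin) addr0. Qed.

Lemma free_hom_unique psi : linearF psi ->
  (forall a, in_h a -> forall u, psi (act a u) = sigma a (psi u)) ->
  psi (1, 0) = w -> psi =1 phi.
Proof.
move=> psi_lin psi_act psi_gen.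
have psi_even f : psi (f, 0) = poly_apply L w f.
  elim/poly_ind: f => [|f c IHf]; first by rewrite poly_apply0 (linearF0 psi_lin).
  have -> : (f * 'X + c%:P, 0) = c *: (1, 0) + act (TL 0) (f, 0).
    rewrite Mact_L0; apply: injective_projections => /=.
      by rewrite -alg_polyC addrC.
    by rewrite mul0r scaler0 addr0.
  rewrite (linearFD psi_lin) (linearFZ psi_lin) psi_gen psi_act // IHf.
  by rewrite -alg_polyC [in RHS]addrC poly_applyP poly_apply1 poly_apply_mulX // addrC.
have psi_odd g : psi (0, g) = A (poly_apply L w g).
  have -> : (0, g) = act (TG 0) (g, 0) by rewrite Mact_G0 mul0r.
  by rewrite psi_act // psi_even.
case=> f g; rewrite /free_hom /=.
have -> : (f, g) = (f, 0) + (0, g).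
  by apply: injective_projections; rewrite /= ?addr0 ?add0r.
by rewrite (linearFD psi_lin) psi_even psi_odd.
Qed.

End UniversalProperty.

Lemma Mact_free_rank1 : free_rank1_Uh act.
Proof.
exists (1, 0) => W sigma sigma_rep w; exists (free_hom (sigma (TL 0)) (sigma (TG 0)) w).
split; first by split; [apply: free_hom_linear | apply: free_hom_act | apply: free_hom_gen].
move=> psi [psi_lin psi_act psi_gen]; apply: boolp.funext => u.
by rewrite (free_hom_unique sigma_rep psi_lin psi_act psi_gen).
Qed.

End FreeRank1.

Lemma eq_poly_horner (F : numDomainType) (p q : {poly F}) :
  (forall x, p.[x] = q.[x]) -> p = q.
Proof.
move=> eq_pq; apply/eqP; rewrite -subr_eq0; apply/eqP.
apply: (@roots_geq_poly_eq0 _ _ (mkseq (fun i => i%:R) (size (p - q)))).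
- by apply/allP => x _; rewrite /root hornerD hornerN eq_pq subrr.
- by rewrite mkseq_uniq // => i j /eqP; rewrite eqr_nat => /eqP.
- by rewrite size_mkseq.
Qed.

Lemma expN1z_mul2 (F : numDomainType) (k : int) : (-1 : F) ^ (2 * k) = 1.
Proof. by rewrite expN1r abszM /= -signr_odd oddM. Qed.

Lemma int_halves (z : int) : exists q, z = 2 * q \/ z = 2 * q + 1.
Proof.
exists (z %/ 2)%Z; have := divz_eq z 2.
have := modz_ge0 z (isT : 2 != 0 :> int); have := ltz_pmod z (isT : 0 < 2 :> int).
lia.
Qed.

Lemma Tbracket_GG_even (F : fieldType) n q :
  Tbracket F (TG n) (TG (2 * q - n)) = (2 * (-1) ^ n, TL q).
Proof. by rewrite /= addrC subrK abszM /= oddM mulKz. Qed.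

Lemma Tbracket_GG_odd (F : fieldType) n q :
  Tbracket F (TG n) (TG (2 * q + 1 - n))
  = ((-1) ^ (n + 1) * (Gidx F n - Gidx F (2 * q + 1 - n)), TI q).
Proof.
have odd_2q1 : odd `|2 * q + 1|.
  have : ~~ (2 %| 2 * q + 1)%Z by rewrite rpredDl ?dvdz1 // dvdz_mulr.
  by rewrite dvdzE /= dvdn2 negbK.
by rewrite /= addrC subrK odd_2q1 addrK mulKz.
Qed.

Lemma expN1z_sign (F : numDomainType) (n : int) : (-1 : F) ^ n = 1 \/ (-1 : F) ^ n = -1.
Proof. by rewrite expN1r -signr_odd; case: (odd _); [right | left]. Qed.

Section BracketRelations.
Variables (F : numFieldType) (t s alpha : F).
Hypotheses (t_sign : t = 1 \/ t = -1) (s_neq0 : s != 0).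
Local Notation act := (Mact t s alpha).
Local Notation scomm a b w := (act a (act b w) - Tsign F a b *: act b (act a w)).

Let N1_neq0 : (-1 : F) != 0. Proof. by rewrite oppr_eq0 oner_eq0. Qed.

(* [field] treats f.[a] and f.[b] as unrelated atoms even when a = b, so the
   arguments of each polynomial are first rewritten to a common one. *)
Local Ltac unify_horner_args :=
  repeat match goal with
  | |- context[ horner ?p ?a ] => match goal with
     | |- context[ horner p ?b ] => assert_fails (constr_eq a b);
         rewrite (_ : b = a); last by field
     end end.

Local Ltac eval_at_point :=
  apply: injective_projections; apply: eq_poly_horner => x;
  rewrite /Tsign /= /shiftp !(horner_comp, hornerD, hornerN, hornerM, hornerZ, hornerX, hornerC);
  rewrite /Iidx /Gidx /Defs.half ?mulrDr ?(expfzDr _ _ s_neq0) ?opprK ?exp1rz;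
  rewrite ?(expfzDr _ _ N1_neq0) ?expN1z_mul2; unify_horner_args.

Lemma Mact_bracket_nonGG a b w : ~~ (Tpar a && Tpar b) ->
  scomm a b w = (Tbracket F a b).1 *: act (Tbracket F a b).2 w.
Proof.
case: w => f g; case: a => [m|k|n1]; case: b => [m'|k'|n2] //= _.
all: by case: t_sign => ht; rewrite ?ht; eval_at_point; field.
Qed.

Lemma Mact_bracket_GG_even n q w :
  scomm (TG n) (TG (2 * q - n)) w = (2 * (-1) ^ n) *: act (TL q) w.
Proof.
case: w => f g; case: t_sign => ->; eval_at_point; rewrite -?invr_expz.
all: by case: (expN1z_sign F n) => ->; field; rewrite ?expfz_neq0.
Qed.

Lemma Mact_bracket_GG_odd n q w :
  scomm (TG n) (TG (2 * q + 1 - n)) w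
  = ((-1) ^ (n + 1) * (Gidx F n - Gidx F (2 * q + 1 - n))) *: act (TI q) w.
Proof.
case: w => f g; case: t_sign => ->; eval_at_point; rewrite -?invr_expz.
all: by case: (expN1z_sign F n) => ->; field; rewrite ?expfz_neq0.
Qed.

Lemma Mact_bracket a b w : scomm a b w = (Tbracket F a b).1 *: act (Tbracket F a b).2 w.
Proof.
have [|not_GG] := boolP (Tpar a && Tpar b); last exact: Mact_bracket_nonGG.
case: a b => [m|k|n] [m'|k'|n'] // _.
have [q [sum_even | sum_odd]] := int_halves (n + n').
- have -> : n' = 2 * q - n by lia.
  by rewrite Tbracket_GG_even Mact_bracket_GG_even.
- have -> : n' = 2 * q + 1 - n by lia.
  by rewrite Tbracket_GG_odd Mact_bracket_GG_odd.
Qed.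

Lemma Mact_T_module : is_T_module (Veven (F := F)) (Vodd (F := F)) act.
Proof.
split; first by split=> [a _ | a b _ _ w]; [apply: Mact_linear | apply: Mact_bracket].
by split=> a w; [apply: Mact_Veven | apply: Mact_Vodd].
Qed.

End BracketRelations.

Theorem proposition2p3 (R : realType) (lambda s alpha t : R[i])
  (hlam : lambda != 0) (hs : s ^+ 2 = lambda) (ht : t = 1 \/ t = -1) :
  is_T_module (Veven (F := R[i])) (Vodd (F := R[i])) (Mact t s alpha) /\
  free_rank1_Uh (Mact t s alpha).
Proof.
have s_neq0 : s != 0 by apply: contraNneq hlam => s0; rewrite -hs s0 expr0n.
split; first exact: Mact_T_module.
by apply: Mact_free_rank1; rewrite pnatr_eq0.
Qed.
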